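(* Let $\alpha\in(0,1)$. For every $\varepsilon>0$ and every natural number $n_0$ there exist natural numbers $n$ and $N$ with $n_0\le n<N$, and random variables $\mathcal{A}_n,\mathcal{A}_{n+1},\dots,\mathcal{A}_N$ (defined on a common probability space) whose values are subsets of $\mathbb{B}^n,\mathbb{B}^{n+1},\dots,\mathbb{B}^N$ respectively, such that: (1) the size of $\mathcal{A}_i$ never exceeds $2^{\alpha i}$, for each $i\in\{n,\dots,N\}$; (2) for every binary string $x$ of length $N$, the probability of the event ''for some $i\in\{n,\dots,N\}$, some element of $\mathcal{A}_i$ is a substring of $x$'' exceeds $1-\varepsilon$.
   Context: $\mathbb{B}^m$ denotes the set of binary strings of length $m$. A substring of $x$ means a contiguous block $x_j x_{j+1}\dots x_{j+\ell-1}$ of consecutive symbols of $x$. *)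

From HB Require Import structures.
From mathcomp Require Import all_boot all_order all_algebra.
From mathcomp Require Import all_classical all_reals all_analysis.
Set Implicit Arguments. Unset Strict Implicit. Unset Printing Implicit Defensive.
Import Order.TTheory GRing.Theory Num.Theory.
Local Open Scope ring_scope.

(* Binary strings of length m: m.-tuple bool.
   "y is a substring of x" (contiguous block): seq's [infix y x]. *)
Definition substring (y x : seq bool) : bool := infix y x.

Definition is_prob (R : realType) (Omega : finType) (p : Omega -> R) : Prop :=
  (forall w, 0 <= p w) /\ \sum_(w : Omega) p w = 1.

Definition Pr (R : realType) (Omega : finType) (p : Omega -> R)
  (E : pred Omega) : R := \sum_(w : Omega | E w) p w.

From HB Require Import structures.
From mathcomp Require Import all_boot all_order all_algebra.
From mathcomp Require Import all_classical all_reals all_analysis.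
From mathcomp Require Import zify.
Set Implicit Arguments. Unset Strict Implicit. Unset Printing Implicit Defensive.
Import Order.TTheory GRing.Theory Num.Theory.
Local Open Scope ring_scope.

(* Choose t with alpha t >= 1 and e with 1/(2^e + 1) < eps, and write l = 2tg.
   By induction on r, every set T of strings of length l with |T| <= 2^((r+1)g)
   admits a random family (A_i)_(l <= i <= N), |A_i| <= 2^(i/t), hitting with
   probability >= 1 - 1/(2^e + 1) every x all of whose l-substrings lie in T.
   For r = 0 take A_l = T.  For the step, let A_l consist of M = 2^(2g)
   independent uniform samples of T: an x with at least s = 2^(e + rg) distinct
   l-substrings is missed with probability <= (1 - s/|T|)^M <= 1/(1 + Ms/|T|)
   <= 1/(2^e + 1).  A string of length l' = 2^l l with fewer than s distinct
   l-substrings is determined by that set and its 2^l consecutive blocks, so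
   there are at most 2^(2^l) s^(2^l) <= 2^((r+1) 2^l g) of them, and the
   induction hypothesis for this set handles every other x.  The theorem is the
   case r = 2t - 1, T = all strings. *)

Section Counting.
Local Open Scope nat_scope.

Lemma expnB_mulD_leq (T s M : nat) : s <= T -> (T - s) ^ M * (T + M * s) <= T ^ M.+1.
Proof.
move=> leST; elim: M => [|M IH]; first by rewrite expn0 mul1n mul0n addn0 expn1.
have step : (T - s) * (T + M.+1 * s) <= T * (T + M * s).
  by rewrite -{1 3 4}(subnKC leST) addKn; nia.
rewrite expnS mulnAC; apply: leq_trans (leq_mul step (leqnn _)) _.
by rewrite -mulnA (expnS _ M.+1) leq_mul2l [_ * (T - s) ^ M]mulnC IH orbT.
Qed.

Lemma card_setsT (T : finType) : #|{: {set T}}| = 2 ^ #|T|.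
Proof. by have := card_powerset [set: T]; rewrite powersetT !cardsT. Qed.

Variable T : finType.

Definition block (l q L : nat) (x0 : T) (v : L.-tuple T) (j : 'I_q) : l.-tuple T :=
  [tuple nth x0 v (j * l + k) | k < l].

Lemma block_take l q L x0 (v : L.-tuple T) (j : 'I_q) : L = q * l ->
  tval (block l x0 v j) = take l (drop (j * l) v).
Proof.
move=> defL; have ltjq := ltn_ord j.
apply: (@eq_from_nth _ x0).
  rewrite size_tuple size_take size_drop size_tuple.
  by case: ltnP => // le; apply/eqP; rewrite eqn_leq le defL; nia.
move=> k; rewrite size_tuple => ltkl.
by rewrite nth_take // nth_drop -(tnth_nth x0 _ (Ordinal ltkl)) tnth_mktuple.
Qed.

Lemma block_infix l q L x0 (v : L.-tuple T) (j : 'I_q) : L = q * l ->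
  infix (block l x0 v j) v.
Proof.
by move=> defL; rewrite block_take //; apply: infix_trans (infix_take _ _) (infix_drop _ _).
Qed.

Lemma blocks_inj l q L x0 : L = q * l ->
  injective (fun v : L.-tuple T => [ffun j : 'I_q => block l x0 v j]).
Proof.
move=> defL v w /ffunP eq_blocks.
apply: val_inj; apply: (@eq_from_nth _ x0); first by rewrite !size_tuple.
move=> p; rewrite size_tuple => ltpL.
have l_gt0 : 0 < l by case: (posnP l) defL ltpL => [-> ->|]; rewrite ?muln0.
have ltpq : p %/ l < q by rewrite ltn_divLR // -defL.
have := congr1 (fun b => tnth b (Ordinal (ltn_pmod p l_gt0))) (eq_blocks (Ordinal ltpq)).
by rewrite !ffunE !tnth_mktuple /= -divn_eq.
Qed.

Lemma exists_infix_tuple l N (x : N.-tuple T) : l <= N -> exists y : l.-tuple T, infix y x.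
Proof.
move=> lelN; have size_y : size (take l x) == l by rewrite size_takel // size_tuple.
by exists (Tuple size_y); apply: infix_take.
Qed.

Definition tuples_in i (s : seq (seq T)) : {set i.-tuple T} :=
  [set y : i.-tuple T | tval y \in s].

Lemma card_tuples_in i s : #|tuples_in i s| <= size s.
Proof.
rewrite cardE -(size_map (@tval i T)); apply: uniq_leq_size.
  by rewrite map_inj_uniq ?enum_uniq //; apply: val_inj.
by move=> z /mapP [y]; rewrite mem_enum inE => ys ->.
Qed.

Lemma tuples_in_sizeN i l s : all (fun z => size z == l) s -> i != l -> tuples_in i s = finset.set0.
Proof.
move=> /allP size_s neq_il; apply/setP => y; rewrite !inE.
by apply/negP => /size_s; rewrite size_tuple => /eqP eq_il; rewrite eq_il eqxx in neq_il.
Qed.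

End Counting.

Section FewInfixes.
Local Open Scope nat_scope.

Lemma card_ffun_on_small (A I : finType) s :
  #|[set c : {set A} * {ffun I -> A} | (#|c.1| < s) && (c.2 \in ffun_on c.1)]|
    <= 2 ^ #|A| * s ^ #|I|.
Proof.
rewrite -sum1_card big_mkcond /=.
under eq_bigr => c _ do rewrite finset.in_set.
rewrite -(pair_bigA _ (fun (F : {set A}) (b : {ffun I -> A}) =>
                          if (#|F| < s) && (b \in ffun_on F) then 1 else 0)) /=.
rewrite -card_setsT -sum_nat_const; apply: leq_sum => F _.
case: (ltnP #|F| s) => ltFs /=; last by rewrite big1.
rewrite -big_mkcond sum1_card card_ffun_on.
case: (posnP #|I|) => [->|I_gt0]; first by rewrite !expn0.
by rewrite leq_exp2r // ltnW.
Qed.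

Definition infixes l N (v : N.-tuple bool) : {set l.-tuple bool} :=
  [set y : l.-tuple bool | infix y v].

(* Such a string is determined by its set of l-infixes F (fewer than s of them)
   and by its q blocks, each of which lies in F. *)
Lemma card_few_infixes l q L s : L = q * l ->
  #|[set v : L.-tuple bool | #|infixes l v| < s]| <= 2 ^ (2 ^ l) * s ^ q.
Proof.
move=> defL; pose code (v : L.-tuple bool) := (infixes l v, [ffun j : 'I_q => block l false v j]).
have code_inj : injective code by move=> v w [_]; apply: blocks_inj.
have -> : 2 ^ (2 ^ l) * s ^ q = 2 ^ #|{: l.-tuple bool}| * s ^ #|'I_q|.
  by rewrite card_tuple card_bool card_ord.
rewrite -(card_imset _ code_inj); apply: leq_trans (card_ffun_on_small _ _ s).
apply/subset_leq_card/fintype.subsetP.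
move=> _ /imsetP [v Vv ->]; rewrite inE in Vv; rewrite inE /= Vv.
by apply/ffun_onP => j; rewrite ffunE inE; apply: block_infix.
Qed.

End FewInfixes.

Section FiniteProbability.
Variable R : realType.

Lemma PrE (O : finType) (p : O -> R) (E : pred O) :
  Pr p E = \sum_(w : O) (if E w then p w else 0).
Proof. by rewrite /Pr big_mkcond. Qed.

Lemma Pr_le (O : finType) (p : O -> R) (E1 E2 : pred O) :
  (forall w, 0 <= p w) -> (forall w, E1 w -> E2 w) -> Pr p E1 <= Pr p E2.
Proof.
move=> p_ge0 sub; rewrite !PrE; apply: ler_sum => w _.
by case: ifP => [/sub -> //|_]; case: ifP.
Qed.

Lemma Pr_predC (O : finType) (p : O -> R) (E : pred O) :
  is_prob p -> Pr p (predC E) = 1 - Pr p E.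
Proof. by move=> [_ <-]; rewrite [X in _ = X - _](bigID E) /= addrC addrK. Qed.

Lemma Pr_predT (O : finType) (p : O -> R) : is_prob p -> Pr p predT = 1.
Proof. by case. Qed.

Definition prodp (O1 O2 : finType) (p1 : O1 -> R) (p2 : O2 -> R) (w : O1 * O2) : R :=
  p1 w.1 * p2 w.2.

Lemma sum_prod (O1 O2 : finType) (f : O1 -> R) (g : O2 -> R) :
  \sum_(w : O1 * O2) f w.1 * g w.2 = (\sum_w1 f w1) * (\sum_w2 g w2).
Proof. by rewrite big_distrlr pair_bigA. Qed.

Lemma is_prob_prodp (O1 O2 : finType) (p1 : O1 -> R) (p2 : O2 -> R) :
  is_prob p1 -> is_prob p2 -> is_prob (prodp p1 p2).
Proof.
move=> [p1_ge0 sum_p1] [p2_ge0 sum_p2]; split; first by move=> w; apply: mulr_ge0.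
by rewrite /prodp sum_prod sum_p1 sum_p2 mulr1.
Qed.

Lemma Pr_prodp (O1 O2 : finType) (p1 : O1 -> R) (p2 : O2 -> R) E1 E2 :
  Pr (prodp p1 p2) (fun w => E1 w.1 && E2 w.2) = Pr p1 E1 * Pr p2 E2.
Proof.
rewrite !PrE -sum_prod; apply: eq_bigr => -[w1 w2] _ /=.
by rewrite /prodp /=; case: (E1 w1); case: (E2 w2); rewrite ?mulr0 ?mul0r.
Qed.

Lemma Pr_prodp_fst (O1 O2 : finType) (p1 : O1 -> R) (p2 : O2 -> R) E1 :
  is_prob p2 -> Pr (prodp p1 p2) (fun w => E1 w.1) = Pr p1 E1.
Proof.
move=> p2P; rewrite -[RHS]mulr1 -(Pr_predT p2P) -Pr_prodp.
by apply: eq_bigl => w; rewrite andbT.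
Qed.

Lemma Pr_prodp_snd (O1 O2 : finType) (p1 : O1 -> R) (p2 : O2 -> R) E2 :
  is_prob p1 -> Pr (prodp p1 p2) (fun w => E2 w.2) = Pr p2 E2.
Proof. by move=> p1P; rewrite -[RHS]mul1r -(Pr_predT p1P) -Pr_prodp. Qed.

Definition unif (O : finType) (w : O) : R := #|O|%:R^-1.

Lemma is_prob_unif (O : finType) : (0 < #|O|)%N -> is_prob (@unif O).
Proof.
move=> O_gt0; split; first by move=> w; rewrite /unif invr_ge0 ler0n.
by rewrite /unif sumr_const -[LHS]mulr_natl mulfV // pnatr_eq0 -lt0n.
Qed.

Lemma Pr_unif (O : finType) (E : pred O) :
  Pr (@unif O) E = #|[set w | E w]|%:R / #|O|%:R.
Proof.
rewrite /Pr /unif sumr_const -[LHS]mulr_natl; congr (_%:R * _).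
by apply: eq_card => w; rewrite inE.
Qed.

(* M independent uniform samples of U all miss S with probability
   (1 - |S|/|U|)^M <= 1/(1 + M |S|/|U|). *)
Lemma Pr_unif_samples_miss (U : finType) (S : {set U}) (M k : nat) :
  (0 < #|U|)%N -> (k * #|U| <= M * #|S|)%N ->
  Pr (@unif {ffun 'I_M -> U}) (fun f => [forall j, f j \notin S]) <= k.+1%:R^-1.
Proof.
move=> U_gt0 kU_le.
have card_miss : (#|[set f : {ffun 'I_M -> U} | [forall j, f j \notin S]]| = (#|U| - #|S|) ^ M)%N.
  have -> : (#|U| - #|S| = #|~: S|)%N by rewrite [in RHS]cardsCs finset.setCK.
  have := @card_ffun_on 'I_M _ (~: S); rewrite card_ord => <-.
  apply: eq_card => f; rewrite !inE.
  by apply/forallP/ffun_onP => miss j; have := miss j; rewrite inE.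
have miss_le : ((#|U| - #|S|) ^ M * k.+1 <= #|U| ^ M)%N.
  rewrite -(leq_pmul2r U_gt0) -expnSr.
  apply: leq_trans (expnB_mulD_leq M (max_card S)).
  by rewrite -mulnA leq_mul2l mulSn leq_add2l kU_le orbT.
rewrite Pr_unif card_miss card_ffun card_ord.
rewrite ler_pdivrMr ?ltr0n ?expn_gt0 ?U_gt0 // ler_pdivlMl ?ltr0n //.
by rewrite -natrM ler_nat mulnC.
Qed.

Lemma Pr_samples_hit (X : finType) (T S : {set X}) (M k : nat) :
  (0 < #|T|)%N -> S \subset T -> (k * #|T| <= M * #|S|)%N ->
  1 - k.+1%:R^-1 <=
    Pr (@unif {ffun 'I_M -> {x | x \in T}}) (fun f => [exists j, val (f j) \in S]).
Proof.
move=> T_gt0 sST kT_le; pose SU := [set y : {x | x \in T} | val y \in S].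
have card_U : #|{: {x | x \in T}}| = #|T| by rewrite card_sig; apply: eq_card.
have card_SU : #|SU| = #|S|.
  rewrite -(card_imset _ val_inj); apply: eq_card => x; apply/imsetP/idP => [[y]|Sx].
    by rewrite inE => Sy ->.
  by exists (exist _ x (fintype.subsetP sST x Sx)); rewrite ?inE.
have -> : Pr (@unif {ffun 'I_M -> {x | x \in T}}) (fun f => [exists j, val (f j) \in S])
    = Pr (@unif _) (predC (fun f : {ffun 'I_M -> {x | x \in T}} => [forall j, f j \notin SU])).
  rewrite /Pr; apply: eq_bigl => f.
  by rewrite /= negb_forall; apply: eq_existsb => j; rewrite inE negbK.
rewrite Pr_predC; last by apply: is_prob_unif; rewrite card_ffun expn_gt0 card_U T_gt0.
by rewrite lerD2l lerN2 Pr_unif_samples_miss ?card_U ?card_SU.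
Qed.

End FiniteProbability.

Section HittingFamilies.

Definition hits (N n : nat) (A : forall i, {set i.-tuple bool}) (x : N.-tuple bool) : bool :=
  [exists i : 'I_N.+1, (n <= i)%N && [exists y in A i, substring y x]].

Lemma hits_intro N n i (A : forall i, {set i.-tuple bool}) (x : N.-tuple bool) (y : i.-tuple bool) :
  (n <= i <= N)%N -> y \in A i -> infix y x -> hits n A x.
Proof.
move=> /andP [le_ni le_iN] Ay yx; apply/existsP; exists (Ordinal (le_iN : i < N.+1)%N).
by rewrite /= le_ni; apply/existsP; exists y; rewrite Ay.
Qed.

Lemma hits_sub N n n' (A B : forall i, {set i.-tuple bool}) (x : N.-tuple bool) :
  (n' <= n)%N -> (forall i, (n <= i)%N -> A i \subset B i) -> hits n A x -> hits n' B x.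
Proof.
move=> le_n'n subAB /existsP [i /andP [le_ni /existsP [y /andP [Ay yx]]]].
apply/existsP; exists i; rewrite (leq_trans le_n'n le_ni) /=.
by apply/existsP; exists y; rewrite yx (fintype.subsetP (subAB i le_ni)).
Qed.

Variable R : realType.
Variables t e : nat.
Hypothesis t_gt0 : (0 < t)%N.

Definition hitting_family (r g : nat) (T : {set (2 * t * g).-tuple bool}) : Prop :=
  exists N, (2 * t * g + r <= N)%N /\
  exists (O : finType) (p : O -> R), is_prob p /\
  exists A : forall i, O -> {set i.-tuple bool},
    (forall i w, (2 * t * g <= i <= N)%N -> (#|A i w| <= 2 ^ (i %/ t))%N) /\
    forall x : N.-tuple bool, (forall y : (2 * t * g).-tuple bool, infix y x -> y \in T) ->
      1 - (2 ^ e).+1%:R^-1 <= Pr p (fun w => hits (2 * t * g) (A^~ w) x).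

Lemma mul2tK g : ((2 * t * g) %/ t = 2 * g)%N.
Proof. by rewrite mulnAC mulnK. Qed.

Lemma card_samples_setU l l' i M (f : 'I_M -> l.-tuple bool) (B : {set i.-tuple bool}) :
  (l < l')%N -> (l <= i)%N -> (M <= 2 ^ (l %/ t))%N -> ((l' <= i)%N -> (#|B| <= 2 ^ (i %/ t))%N) ->
  (#|tuples_in i [seq tval (f j) | j <- enum 'I_M] :|: (if (l' <= i)%N then B else finset.set0)|
    <= 2 ^ (i %/ t))%N.
Proof.
move=> lt_ll' le_li le_M leB; case: ifP => [le_l'i|_].
  have size_samples : all (fun z => size z == l) [seq tval (f j) | j <- enum 'I_M].
    by apply/allP => _ /mapP [j _ ->]; rewrite size_tuple.
  rewrite (tuples_in_sizeN size_samples) ?finset.set0U ?leB //.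
  by rewrite neq_ltn (leq_trans lt_ll' le_l'i) orbT.
rewrite finset.setU0; apply: leq_trans (card_tuples_in _ _) _.
rewrite size_map size_enum_ord; apply: leq_trans le_M _.
by rewrite leq_exp2l // leq_div2r.
Qed.

Lemma hitting_family_set0 r g : hitting_family r (finset.set0 : {set (2 * t * g).-tuple bool}).
Proof.
exists (2 * t * g + r)%N; split => //; exists unit, (fun => 1); split.
  by split => //; rewrite big_const card_unit /= addr0.
exists (fun _ _ => finset.set0); split=> [i w _|x coveredx]; first by rewrite cards0.
have [y /coveredx] := exists_infix_tuple x (leq_addr r _).
by rewrite inE.
Qed.

Lemma hitting_family0 g (T : {set (2 * t * g).-tuple bool}) : (#|T| <= 2 ^ g)%N ->
  hitting_family 0 T.
Proof.
set l := (2 * t * g)%N => leT; exists l; split; first by rewrite addn0.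
exists unit, (fun => 1); split; first by split => //; rewrite big_const card_unit /= addr0.
exists (fun i _ => tuples_in i [seq tval z | z <- enum T]); split.
  move=> i w lei; have -> : i = l by apply/eqP; rewrite eqn_leq andbC.
  apply: leq_trans (card_tuples_in _ _) _; rewrite size_map -cardE mul2tK.
  by apply: leq_trans leT _; rewrite leq_exp2l //; lia.
move=> x coveredx.
have hitx : hits l (fun i => tuples_in i [seq tval z | z <- enum T]) x.
  apply: (hits_intro (y := x)); rewrite ?leqnn ?infix_refl //.
  by rewrite inE map_f // mem_enum coveredx ?infix_refl.
by rewrite /Pr big_mkcond big_const card_unit /= hitx addr0 gerBl invr_ge0.
Qed.

Lemma card_few_infixes_step r g : (e < g)%N ->
  (#|[set v : (2 * t * (2 ^ (2 * t * g) * g)).-tuple bool |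
      #|infixes (2 * t * g) v| < 2 ^ e * 2 ^ (r * g)]| <= 2 ^ (r.+1 * (2 ^ (2 * t * g) * g)))%N.
Proof.
move=> lt_eg; set l := (2 * t * g)%N.
apply: leq_trans (card_few_infixes (q := 2 ^ l) _ _) _; first by lia.
rewrite -expnD -expnM -expnD leq_exp2l //.
have le_exp : (1 + (e + r * g) <= r.+1 * g)%N by nia.
by move: (2 ^ l)%N => q; have := leq_mul (leqnn q) le_exp; nia.
Qed.

Lemma hitting_familyS r g (T : {set (2 * t * g).-tuple bool}) : (e < g)%N ->
  (#|T| <= 2 ^ (r.+2 * g))%N ->
  (forall g' (T' : {set (2 * t * g').-tuple bool}), (e < g')%N ->
     (#|T'| <= 2 ^ (r.+1 * g'))%N -> hitting_family r T') ->
  hitting_family r.+1 T.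
Proof.
move=> lt_eg leT IH; set l := (2 * t * g)%N.
have [->|T_gt0] := eqVneq T finset.set0; first exact: hitting_family_set0.
rewrite -card_gt0 in T_gt0.
set g' := (2 ^ l * g)%N; set s := (2 ^ e * 2 ^ (r * g))%N.
set T' := [set v : (2 * t * g').-tuple bool | (#|infixes l v| < s)%N].
have lt_eg' : (e < g')%N by rewrite /g'; have := expn_gt0 2 l; nia.
have [N [leN [Om [p [pP [A [leA hitA]]]]]]] := IH g' T' lt_eg' (card_few_infixes_step r lt_eg).
have lt_ll' : (l < 2 * t * g')%N.
  have : (1 < 2 ^ l)%N by rewrite -{1}(expn0 2) ltn_exp2l // /l; nia.
  by rewrite /g' /l; move: (2 ^ _)%N => q; nia.
pose U : finType := {y : l.-tuple bool | y \in T}; pose M := (2 ^ (2 * g))%N.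
have card_U : #|U| = #|T| by rewrite card_sig; apply: eq_card.
have unifP : is_prob (@unif R {ffun 'I_M -> U}).
  by apply: is_prob_unif; rewrite card_ffun expn_gt0 card_U T_gt0.
exists N; split; first by rewrite /l; lia.
exists (Om * {ffun 'I_M -> U})%type, (prodp p (@unif R _)); split; first exact: is_prob_prodp.
exists (fun i (w : Om * {ffun 'I_M -> U}) => tuples_in i [seq tval (val (w.2 j)) | j <- enum 'I_M]
                    :|: (if (2 * t * g' <= i)%N then A i w.1 else finset.set0)).
split=> [i w /andP [le_li le_iN]|x coveredx].
  apply: card_samples_setU => // [|le_l'i]; first by rewrite mul2tK.
  by apply: leA; rewrite le_l'i.
set S := infixes l x.
have p_ge0 : forall w, 0 <= prodp p (@unif R {ffun 'I_M -> U}) w.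
  by case: pP unifP => p_ge0 _ [unif_ge0 _] w; apply: mulr_ge0.
case: (leqP s #|S|) => [le_sS|lt_Ss].
  have sST : S \subset T by apply/fintype.subsetP => y; rewrite inE; apply: coveredx.
  have many_samples : (2 ^ e * #|T| <= M * #|S|)%N.
    apply: leq_trans (leq_mul (leqnn M) le_sS); rewrite mulnCA -expnD leq_mul2l.
    by apply/orP; right; apply: leq_trans leT _; rewrite leq_exp2l //; lia.
  apply: le_trans (Pr_samples_hit R T_gt0 sST many_samples) _.
  rewrite -(Pr_prodp_snd _ _ pP); apply: Pr_le => // w /existsP [j Sj].
  apply: (hits_intro (y := val (w.2 j))).
  - by rewrite leqnn; apply: leq_trans (ltnW lt_ll') (leq_trans (leq_addr _ _) leN).
  - by rewrite !inE; apply/orP; left; apply/mapP; exists j; rewrite ?mem_enum.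
  - by rewrite inE in Sj.
apply: le_trans (hitA x _) _.
  move=> v vx; rewrite inE; apply: leq_ltn_trans lt_Ss; apply: subset_leq_card.
  by apply/fintype.subsetP => y; rewrite !inE => yv; apply: infix_trans yv vx.
rewrite -(Pr_prodp_fst p _ unifP); apply: Pr_le => // w.
apply: hits_sub => [|i le_l'i]; first exact: ltnW.
by rewrite le_l'i finset.subsetUr.
Qed.

Lemma hitting_familyP r g (T : {set (2 * t * g).-tuple bool}) :
  (e < g)%N -> (#|T| <= 2 ^ (r.+1 * g))%N -> hitting_family r T.
Proof.
elim: r g T => [|r IH] g T lt_eg leT; last exact: hitting_familyS.
by apply: hitting_family0; rewrite mul1n in leT.
Qed.

End HittingFamilies.

Lemma ge1_mul_truncnS_inv (R : archiRealFieldType) (a : R) :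
  0 < a -> 1 <= a * (Num.truncn a^-1).+1%:R.
Proof. by move=> a_gt0; rewrite -ler_pdivrMl // mulr1 ltW // truncnS_gt. Qed.

Lemma inv_exp2S_lt (R : archiRealFieldType) (eps : R) :
  0 < eps -> (2 ^ (Num.truncn eps^-1).+1).+1%:R^-1 < eps.
Proof.
move=> eps_gt0; rewrite -(@ltf_pV2 R) ?posrE ?invr_gt0 ?ltr0n // invrK.
apply: lt_le_trans (truncnS_gt eps^-1) _; rewrite ler_nat.
exact: ltnW (leq_trans (ltn_expl _ (isT : (1 < 2)%N)) (leqnSn _)).
Qed.

Lemma exp2_divn_le_powR (R : realType) (a : R) (t i : nat) :
  1 <= a * t%:R -> (2 ^ (i %/ t))%:R <= 2 `^ (a * i%:R).
Proof.
move=> ge1_at; rewrite natrX -powR_mulrn // ler_powR ?ler1n //.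
apply: le_trans (_ : (i %/ t)%:R * (a * t%:R) <= _); first by rewrite ler_peMr ?ler0n.
have t_gt0 : (0 < t)%N by case: t ge1_at => //; rewrite mulr0 ler10.
have a_gt0 : 0 < a by move: (lt_le_trans ltr01 ge1_at); rewrite pmulr_lgt0 // ltr0n.
by rewrite mulrCA -natrM ler_pM2l // ler_nat leq_divM.
Qed.

Unset Implicit Arguments.

Theorem lemma3 (R : realType) (alpha : R) (halpha : 0 < alpha < 1) :
  forall (eps : R), 0 < eps -> forall n0 : nat,
  exists n N : nat, (n0 <= n)%N /\ (n < N)%N /\
  exists (Omega : finType) (p : Omega -> R),
    is_prob p /\
    exists A : forall i : nat, Omega -> {set i.-tuple bool},
      (forall (i : nat) (w : Omega), (n <= i <= N)%N ->
         (#|A i w|%:R <= 2 `^ (alpha * i%:R))) /\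
      (forall x : N.-tuple bool,
         1 - eps < Pr p (fun w =>
           [exists i : 'I_N.+1,
              (n <= i)%N && [exists y in A i w, substring y x]])).
Proof.
move=> eps eps_gt0 n0; case/andP: halpha => alpha_gt0 _.
set t := (Num.truncn alpha^-1).+1; set e := (Num.truncn eps^-1).+1.
set g := maxn n0 e.+1; set r := (2 * t).-1.
have t_gt0 : (0 < t)%N by [].
have leT : (#|[set: (2 * t * g).-tuple bool]| <= 2 ^ (r.+1 * g))%N.
  by rewrite cardsT card_tuple card_bool prednK // muln_gt0.
have [N [leN [Om [p [pP [A [leA hitA]]]]]]] := hitting_familyP R t_gt0 (leq_maxr n0 e.+1) leT.
exists (2 * t * g)%N, N; split; first by apply: leq_trans (leq_maxl n0 e.+1) _; nia.
split; first by rewrite /r; nia.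
exists Om, p; split => //; exists A; split=> [i w le_i|x].
  apply: le_trans (exp2_divn_le_powR _ (ge1_mul_truncnS_inv alpha_gt0)).
  by rewrite ler_nat leA.
apply: lt_le_trans (hitA x (fun y _ => finset.in_setT y)).
by rewrite ltrD2l ltrN2 inv_exp2S_lt.
Qed.
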